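(* Let $\gamma:[0,1]\to\mathbb R^d$ be bounded and measurable, let $\alpha\in(0,1]$, $b\in L^1_tC^{\alpha,\mathrm{loc}}_x$, and consider the ODE $y_t=y_0+\int_0^tb_s(y_s)\mathrm ds+\gamma_t$. Suppose it admits a locally $\beta$-Hölder continuous semiflow $\Phi$ with $\beta(1+\alpha)>1$. Then for any $0\le S\le T\le1$ and $y\in\mathbb R^d$ there exists a unique solution $z:[S,T]\to\mathbb R^d$ of $z_t=y+\int_S^tb_r(z_r)\mathrm dr+\gamma_t-\gamma_S$, $t\in[S,T]$, and it is given by $z_t=\Phi_{S\to t}(y)$.
   Context: $C^{\alpha,\mathrm{loc}}_x$ is the space of functions $f$ on $\mathbb R^d$ with $fg\in C^\alpha_x$ for every smooth compactly supported $g$ (locally $\alpha$-Hölder functions for $\alpha<1$); $L^1_tC^{\alpha,\mathrm{loc}}_x=L^1([0,1];C^{\alpha,\mathrm{loc}}_x)$ (all local seminorms integrable). A semiflow is a jointly measurable $\Phi:\{0\le s\le t\le1\}\times\mathbb R^d\to\mathbb R^d$ with $\Phi_{s\to t}(x)=x+\int_s^tb_r(\Phi_{s\to r}(x))\mathrm dr+\gamma_t-\gamma_s$ for all $(s,x)$, $t\in[s,1]$, and $\Phi_{s\to t}(x)=\Phi_{r\to t}(\Phi_{s\to r}(x))$ for $s\le r\le t$. It is locally $\beta$-Hölder continuous if for every $K>0$ there is $N$ with $|\Phi_{s\to t}(x)-\Phi_{s\to t}(y)|\le N|x-y|^\beta$ for all $s\le t$ and $x,y\in B_K$. *)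

(* R^d is modelled as row vectors 'rV[R]_d with the
   library's (max) norm; all norms on R^d are equivalent. *)
From HB Require Import structures.
From mathcomp Require Import all_boot all_order all_algebra.
From mathcomp Require Import all_classical all_reals all_analysis.
From mathcomp Require Import measurable_realfun.
Set Implicit Arguments. Unset Strict Implicit. Unset Printing Implicit Defensive.
Import Order.TTheory GRing.Theory Num.Theory.
Import numFieldNormedType.Exports.
Local Open Scope classical_set_scope.
Local Open Scope ring_scope.

Definition vint (R : realType) (d : nat) (s t : R) (f : R -> 'rV[R]_d) : 'rV[R]_d :=
  \row_i Rintegral (@lebesgue_measure R) `[s, t] (fun r => f r 0 i).

Definition vintegrable (R : realType) (d : nat) (s t : R) (f : R -> 'rV[R]_d) : Prop :=
  forall i : 'I_d, (@lebesgue_measure R).-integrable `[s, t] (fun r => (f r 0 i)%:E).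

(* b in L^1_t C^{alpha,loc}_x: b_t(x) measurable in t, and for every ball B_K the
   local C^alpha norm  sup_{B_K}|b_t| + [b_t]_{alpha,B_K}  is dominated by an
   integrable function of t on [0,1]. *)
Definition L1t_Calpha_loc (R : realType) (d : nat) (alpha : R)
    (b : R -> 'rV[R]_d -> 'rV[R]_d) : Prop :=
  (forall (x : 'rV[R]_d) (i : 'I_d), measurable_fun (`[0%R, 1%R] : set R) (fun t => b t x 0 i)) /\
  (forall K : R, 0 < K -> exists g : R -> \bar R,
     [/\ measurable_fun (`[0%R, 1%R] : set R) g,
         (forall t : R, (0 <= g t)%E),
         (\int[@lebesgue_measure R]_(t in (`[0%R, 1%R] : set R)) g t < +oo)%E &
         forall t : R, 0 <= t -> t <= 1 -> forall x y : 'rV[R]_d, `|x| <= K -> `|y| <= K ->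
           ((`|b t x|)%R%:E <= g t)%E /\
           ((`|b t x - b t y|)%R%:E <= g t * ((`|x - y|) `^ alpha)%R%:E)%E]).

Definition borel_sets (T : topologicalType) : set (set T) := <<s setT, open >>.

(* Semiflow of  y_t = y_0 + \int_0^t b_s(y_s) ds + gamma_t  (Phi s t x = Phi_{s->t}(x)) *)
Definition is_semiflow (R : realType) (d : nat) (b : R -> 'rV[R]_d -> 'rV[R]_d)
    (gamma : R -> 'rV[R]_d) (Phi : R -> R -> 'rV[R]_d -> 'rV[R]_d) : Prop :=
  [/\
      (forall (i : 'I_d) (U : set R), open U ->
         borel_sets
           ([set p : (R * R) * 'rV[R]_d | 0 <= p.1.1 /\ p.1.1 <= p.1.2 /\ p.1.2 <= 1]
            `&` (fun p : (R * R) * 'rV[R]_d => Phi p.1.1 p.1.2 p.2 0 i) @^-1` U)),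
      (forall (s t : R) (x : 'rV[R]_d), 0 <= s -> s <= t -> t <= 1 ->
         vintegrable s t (fun r => b r (Phi s r x)) /\
         Phi s t x = x + vint s t (fun r => b r (Phi s r x)) + gamma t - gamma s) &
      (forall (s r t : R) (x : 'rV[R]_d), 0 <= s -> s <= r -> r <= t -> t <= 1 ->
         Phi s t x = Phi r t (Phi s r x))].

Definition loc_holder_semiflow (R : realType) (d : nat) (beta : R)
    (Phi : R -> R -> 'rV[R]_d -> 'rV[R]_d) : Prop :=
  forall K : R, 0 < K -> exists N : R,
    forall (s t : R) (x y : 'rV[R]_d), 0 <= s -> s <= t -> t <= 1 ->
      `|x| <= K -> `|y| <= K -> `|Phi s t x - Phi s t y| <= N * `|x - y| `^ beta.

Definition is_solution (R : realType) (d : nat) (b : R -> 'rV[R]_d -> 'rV[R]_d)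
    (gamma : R -> 'rV[R]_d) (S T : R) (y : 'rV[R]_d) (z : R -> 'rV[R]_d) : Prop :=
  forall t, S <= t -> t <= T ->
    vintegrable S t (fun r => b r (z r)) /\
    z t = y + vint S t (fun r => b r (z r)) + gamma t - gamma S.

From HB Require Import structures.
From mathcomp Require Import all_boot all_order all_algebra.
From mathcomp Require Import all_classical all_reals all_analysis.
From mathcomp Require Import measurable_realfun.
From mathcomp Require Import ring lra.
Set Implicit Arguments. Unset Strict Implicit. Unset Printing Implicit Defensive.
Import Order.TTheory GRing.Theory Num.Theory.
Import numFieldNormedType.Exports.
Local Open Scope classical_set_scope.
Local Open Scope ring_scope.

(* Let z solve the equation on [S, T] from y and put f u := Phi_{u->T}(z_u), so
   that f S = Phi_{S->T}(y) and f T = z_T. For s <= t the semiflow property gives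
   f t - f s = Phi_{t->T}(z_t) - Phi_{t->T}(Phi_{s->t}(z_s)), and the gap
   Phi_{s->t}(z_s) - z_t is the integral over [s, t] of
   b_r(Phi_{s->r}(z_s)) - b_r(z_r). With G(s, t) the integral over [s, t] of the
   local alpha-Hölder constant g of b, the gap is at most G^(1+alpha) once a
   continuity bootstrap has kept it below 1 (so that both paths stay in a ball
   where the Hölder bounds apply). The beta-Hölder continuity of the flow then
   yields |f t - f s| <= N G^(beta (1+alpha)) = o(G) as beta (1+alpha) > 1, and a
   function whose increments are o(H t - H s) for a continuous H is constant. *)

Section mx_norm_bounds.
Variables (R : realDomainType) (m n : nat).
Implicit Types (M : 'M[R]_(m, n)) (C : R).

Lemma mx_coord_le_norm M i j : `|M i j| <= `|M|.
Proof.
rewrite [leRHS]/Num.norm /= mx_normrE.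
by apply/bigmax_geP; right; exists (i, j).
Qed.

Lemma mx_norm_le M C : 0 <= C -> (forall i j, `|M i j| <= C) -> `|M| <= C.
Proof.
move=> C0 MC; rewrite [leLHS]/Num.norm /= mx_normrE.
by elim/big_ind: _ => // x y; rewrite ge_max => -> ->.
Qed.

Lemma mx_norm_lt M C : 0 < C -> (forall i j, `|M i j| < C) -> `|M| < C.
Proof.
move=> C0 MC; rewrite [ltLHS]/Num.norm /= mx_normrE.
by elim/big_ind: _ => // x y; rewrite gt_max => -> ->.
Qed.

End mx_norm_bounds.

Section real_line.
Variable R : realType.

Lemma itvcc_mem (a b x : R) : a <= x -> x <= b -> `[a, b]%classic x.
Proof. by move=> ax xb; rewrite /= in_itv /= ax xb. Qed.

Lemma within_continuous_dist (V : normedModType R) (f : R -> V) (A : set R) x :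
  {within A, continuous f} -> A x -> forall e, 0 < e ->
  exists2 dl, 0 < dl & forall y, A y -> `|x - y| < dl -> `|f x - f y| < e.
Proof.
move=> /subspace_continuousP fc Ax e e0.
have fx := (cvgrPdist_lt _ _).1 (fc x Ax) e e0.
have [dl dl0 fdl] := (nbhs_ballP _ _).1 (fx (within_filter _ _)).
by exists dl => // y Ay xy; exact: fdl.
Qed.

Lemma within_continuous_mx m n (F : R -> 'M[R]_(m, n)) (A : set R) :
  (forall i j, {within A, continuous (fun r => F r i j)}) -> {within A, continuous F}.
Proof.
move=> Fc; apply/subspace_continuousP => x Ax; apply/cvgrPdist_lt => e e0.
have Fij i j := (cvgrPdist_lt _ _).1 ((subspace_continuousP _ _).1 (Fc i j) x Ax) e e0.
have : \forall t \near within A (nbhs x), forall i j, `|F x i j - F t i j| < e.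
  apply: filter_forall => i; apply: filter_forall => j.
  by apply: Fij; exact: within_filter.
by apply: filterS => t Ft; apply: mx_norm_lt => // i j; rewrite !mxE; exact: Ft.
Qed.

Lemma itv_continuous_induction (a c : R) (P : R -> Prop) : a <= c ->
  (forall x, a <= x -> x <= c -> (forall y, a <= y -> y < x -> P y) -> P x) ->
  (forall x, a <= x -> x < c -> (forall y, a <= y -> y <= x -> P y) ->
    exists2 e, 0 < e & forall y, x < y -> y < x + e -> y <= c -> P y) ->
  forall x, a <= x -> x <= c -> P x.
Proof.
move=> ac closed extend.
pose A := [set x | x <= c /\ forall y, a <= y -> y <= x -> P y].
have Aa : A a.
  split=> // y ay ya; have -> : y = a by apply/eqP; rewrite eq_le ya ay.
  by apply: closed => // y' ay' y'a; exfalso; lra.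
have supA : has_sup A by split; [exists a | exists c => x []].
set m := sup A.
have am : a <= m := sup_upper_bound supA Aa.
have mc : m <= c by apply: ge_sup; [exists a | move=> x []].
have below y : a <= y -> y < m -> P y.
  move=> ay ym; have my : 0 < m - y by rewrite subr_gt0.
  have [x [_ Px] mx] := sup_adherent my supA.
  by apply: Px => //; rewrite -/m in mx; lra.
have upto y : a <= y -> y <= m -> P y.
  move=> ay; rewrite le_eqVlt => /predU1P[->|]; last exact: below.
  exact: closed.
have [mc'|cm] := ltP m c; last by move=> x ax xc; apply: upto; lra.
have [e e0 Pe] := extend m am mc' upto.
pose x := m + Num.min e (c - m) / 2.
have emin : 0 < Num.min e (c - m) by rewrite lt_min e0 subr_gt0.
have [mine minc] : Num.min e (c - m) <= e /\ Num.min e (c - m) <= c - m.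
  by split; rewrite ge_min lexx ?orbT.
suff /(sup_upper_bound supA) : A x by rewrite -/m /x; lra.
split=> [|y ay yx]; first by rewrite /x; lra.
have [ym|my] := leP y m; first exact: upto.
by apply: Pe => //; rewrite /x in yx; lra.
Qed.

Lemma continuity_bootstrap (V : normedModType R) (w : R -> V) (s t c : R) :
  s <= t -> c < 1 -> {within `[s, t], continuous w} -> `|w s| <= c ->
  (forall v, s <= v -> v <= t ->
     (forall u, s <= u -> u <= v -> `|w u| <= 1) -> `|w v| <= c) ->
  forall r, s <= r -> r <= t -> `|w r| <= c.
Proof.
move=> st c1 wc ws improve.
have wnear x e : s <= x -> x <= t -> 0 < e -> exists2 dl, 0 < dl &
    forall u, s <= u -> u <= t -> `|x - u| < dl -> `|w x - w u| < e.
  move=> sx xt e0; have [dl dl0 wdl] := within_continuous_dist wc (itvcc_mem sx xt) e0.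
  by exists dl => // u su ut; apply/wdl/itvcc_mem.
apply: (itv_continuous_induction st) => [x sx xt below | x sx xt upto].
- have [->|xs] := eqVneq x s; first exact: ws.
  rewrite leNgt; apply/negP => cx.
  have [dl dl0 wdl] := wnear x (`|w x| - c) sx xt (ltac:(by rewrite subr_gt0)).
  pose u := Num.max s (x - dl / 2).
  have [su xu] : s <= u /\ x - dl / 2 <= u by split; rewrite le_max lexx ?orbT.
  have ux : u < x by rewrite gt_max lt_neqAle eq_sym xs sx /=; lra.
  have := wdl u su (ltW (lt_le_trans ux xt)) (ltac:(rewrite ger0_norm; lra)).
  have := below u su ux; have := ler_normD (w x - w u) (w u); rewrite subrK.
  lra.
- have [dl dl0 wdl] := wnear x (1 - c) sx (ltW xt) (ltac:(by rewrite subr_gt0)).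
  exists dl => // v xv vdl vt; apply: improve => //; first lra.
  move=> u su uv; have [ux|xu] := leP u x; first by have := upto u su ux; lra.
  have := wdl u su (le_trans uv vt) (ltac:(rewrite ltr0_norm ?subr_lt0 //; lra)).
  have := upto x sx (lexx x); have := ler_normD (w u - w x) (w x).
  by rewrite subrK distrC; lra.
Qed.

Lemma small_increments_le (V : normedModType R) (f : R -> V) (H : R -> R) (S T eps : R) :
  S <= T -> {within `[S, T], continuous H} ->
  (exists2 dl, 0 < dl & forall s t, S <= s -> s <= t -> t <= T ->
     H t - H s <= dl -> `|f t - f s| <= eps * (H t - H s)) ->
  `|f T - f S| <= eps * (H T - H S).
Proof.
move=> ST Hc [dl dl0 fdl].
have fnear x : S <= x -> x <= T -> exists2 dh, 0 < dh & forall s t,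
    S <= s -> s <= t -> t <= T -> `|x - s| < dh -> `|x - t| < dh ->
    `|f t - f s| <= eps * (H t - H s).
  move=> Sx xT; have dl2 : 0 < dl / 2 by rewrite divr_gt0.
  have [dh dh0 Hdh] := within_continuous_dist Hc (itvcc_mem Sx xT) dl2.
  exists dh => // s t Ss st tT xs xt; apply: fdl => //.
  have := Hdh s (itvcc_mem Ss (le_trans st tT)) xs.
  have := Hdh t (itvcc_mem (le_trans Ss st) tT) xt.
  have := ler_norm (H x - H s); have := ler_norm (H t - H x).
  by rewrite distrC; lra.
apply: (itv_continuous_induction ST (P := fun t => `|f t - f S| <= eps * (H t - H S)))
  => // [x Sx xT below | x Sx xT upto].
- have [->|xS] := eqVneq x S; first by rewrite !subrr normr0 mulr0.
  have [dh dh0 fdh] := fnear x Sx xT.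
  pose u := Num.max S (x - dh / 2).
  have [Su xu] : S <= u /\ x - dh / 2 <= u by split; rewrite le_max lexx ?orbT.
  have ux : u < x by rewrite gt_max lt_neqAle eq_sym xS Sx /=; lra.
  have := fdh u x Su (ltW ux) xT (ltac:(rewrite ger0_norm; lra))
    (ltac:(by rewrite subrr normr0)).
  have := below u Su ux; have := ler_normD (f x - f u) (f u - f S).
  rewrite addrA subrK; lra.
- have [dh dh0 fdh] := fnear x Sx (ltW xT).
  exists dh => // v xv vdh vT.
  have := fdh x v Sx (ltW xv) vT (ltac:(by rewrite subrr normr0))
    (ltac:(rewrite ltr0_norm ?subr_lt0 //; lra)).
  have := upto x Sx (lexx x); have := ler_normD (f v - f x) (f x - f S).
  rewrite addrA subrK; lra.
Qed.

Lemma small_increments_eq (V : normedModType R) (f : R -> V) (H : R -> R) (S T : R) :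
  S <= T -> {within `[S, T], continuous H} ->
  (forall eps, 0 < eps -> exists2 dl, 0 < dl & forall s t, S <= s -> s <= t -> t <= T ->
     H t - H s <= dl -> `|f t - f s| <= eps * (H t - H s)) ->
  f T = f S.
Proof.
move=> ST Hc small.
apply/eqP; rewrite -subr_eq0 -normr_eq0 eq_le normr_ge0 andbT leNgt; apply/negP => D0.
set D := `|f T - f S| in D0; set G := H T - H S.
have G1 : 0 < `|G| + 1 by rewrite ltr_wpDl.
have e0 : 0 < D / (`|G| + 1) by rewrite divr_gt0.
have lt_D : D / (`|G| + 1) * `|G| < D.
  by rewrite mulrAC ltr_pdivrMr // ltr_pM2l // ltrDl.
have := small_increments_le ST Hc (small _ e0).
move=> /le_trans /(_ (ler_wpM2l (ltW e0) (ler_norm G))).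
by rewrite leNgt lt_D.
Qed.

Lemma powR_superlinear_near0 (N eps p : R) : 0 <= N -> 0 < eps -> 1 < p ->
  exists2 dl, 0 < dl & forall x, 0 <= x -> x <= dl -> N * x `^ p <= eps * x.
Proof.
move=> N0 eps0 p1; pose a := eps / (N + 1).
have N1 : 0 < N + 1 by rewrite ltr_wpDl.
have a0 : 0 < a by rewrite divr_gt0.
have q0 : 0 < p - 1 by rewrite subr_gt0.
exists (a `^ (p - 1)^-1); first by rewrite powR_gt0.
move=> x x0 xdl.
have xp : x `^ p = x * x `^ (p - 1).
  rewrite -[X in X * _](powRr1 x0) -powRD; first by rewrite addrC subrK.
  by rewrite addrC subrK gt_eqF // (lt_trans ltr01 p1).
have xq : x `^ (p - 1) <= a.
  rewrite -[leRHS](powRr1 (ltW a0)) -[in a `^ 1](mulVf (lt0r_neq0 q0)) powRrM.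
  by apply: ge0_ler_powR; rewrite ?nnegrE ?powR_ge0 // ltW.
rewrite xp; apply: le_trans (_ : N * (x * a) <= _).
  by rewrite ler_wpM2l // ler_wpM2l.
have -> : N * (x * a) = eps * x * (N / (N + 1)) by rewrite /a; field; exact: lt0r_neq0.
by rewrite ler_piMr ?mulr_ge0 ?(ltW eps0) // ler_pdivrMr // mul1r lerDl.
Qed.

End real_line.

Section fine_integral.
Context {dT : measure_display} {T : measurableType dT} {R : realType}.
Variables (mu : {measure set T -> \bar R}) (A : set T) (g : T -> \bar R).
Hypotheses (mA : measurable A) (g_meas : measurable_fun A g).
Hypotheses (g_ge0 : forall x, (0 <= g x)%E) (g_fin : (\int[mu]_(x in A) g x < +oo)%E).

Lemma integrable_fine B : measurable B -> B `<=` A ->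
  mu.-integrable B (EFin \o (fine \o g)).
Proof.
move=> mB BA; have gB := measurable_funS mA BA g_meas.
have fine_g : measurable_fun B (EFin \o (fine \o g)).
  by apply/measurable_EFinP; apply: measurableT_comp.
apply/integrableP; split => //; apply: le_lt_trans g_fin.
apply: le_trans _ (ge0_subset_integral mu mB mA g_meas (fun x _ => g_ge0 x) BA).
apply: ge0_le_integral => //; first exact: measurableT_comp.
move=> x _ /=; rewrite ger0_norm ?fine_ge0 //.
by case: (g x) (g_ge0 x) => [r _| |] //=; rewrite leey.
Qed.

Lemma integral_fine B : measurable B -> B `<=` A ->
  (\int[mu]_(x in B) g x)%E = (Rintegral mu B (fine \o g))%:E.
Proof.
move=> mB BA; have gB := measurable_funS mA BA g_meas.
have gint : mu.-integrable B g.
  apply: integrableS mA mB BA _; apply/integrableP; split => //.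
  by under eq_integral do rewrite gee0_abs //.
have -> : (\int[mu]_(x in B) g x = \int[mu]_(x in B) (fine (g x))%:E)%E.
  apply: ae_eq_integral => //; first exact: (measurable_int _ (integrable_fine mB BA)).
  by apply: filterS (integrable_ae mB gint) => x gx Bx; rewrite fineK //; exact: gx.
by rewrite /Rintegral fineK //; exact: integrable_fin_num (integrable_fine mB BA).
Qed.

End fine_integral.

Lemma le_normr_Rintegral_mul {dT : measure_display} {T : measurableType dT} {R : realType}
    (mu : {measure set T -> \bar R}) (D : set T) (g : T -> \bar R) (h : T -> R) (c : R) :
  measurable D -> 0 <= c -> measurable_fun D g -> (forall x, D x -> (0 <= g x)%E) ->
  mu.-integrable D (EFin \o h) -> (forall x, D x -> ((`|h x|)%:E <= g x * c%:E)%E) ->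
  ((`|Rintegral mu D h|)%:E <= (\int[mu]_(x in D) g x) * c%:E)%E.
Proof.
move=> mD c0 g_meas g_ge0 hint hg.
rewrite /Rintegral -abse_EFin fineK; last exact: integrable_fin_num.
apply: le_trans (le_abse_integral _ _ (measurable_int _ hint)) _ => //.
rewrite -ge0_integralZr //; apply: ge0_le_integral => //.
  by apply: measurableT_comp => //; exact: measurable_int hint.
by apply: emeasurable_funM => //; exact: measurable_cst.
Qed.

Section vector_integral.
Context {R : realType} {d : nat}.
Local Notation mu := (@lebesgue_measure R).
Implicit Types (f h : R -> 'rV[R]_d) (s t u : R).

Lemma Rintegral_itv_split (h : R -> R) s t u : s <= t -> t <= u ->
  mu.-integrable `[s, u] (EFin \o h) ->
  Rintegral mu `[s, u] h = Rintegral mu `[s, t] h + Rintegral mu `[t, u] h.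
Proof.
move=> st tu hint.
have := @Rintegral_itvB R h (BLeft s) (BRight u) t hint.
rewrite !bnd_simp => /(_ st tu) split_tu.
rewrite -[Rintegral mu `[t, u] h]Rintegral_itv_obnd_cbnd -?split_tu ?subrKC //.
by apply: integrableS hint => //; apply: subset_itvr; rewrite bnd_simp.
Qed.

Lemma vint_itv1 f s : vint s s f = 0.
Proof. by apply/rowP => i; rewrite !mxE set_itv1 Rintegral_set1. Qed.

Lemma vint_continuous h s t : s <= t -> vintegrable s t h ->
  {within `[s, t], continuous (fun r => vint s r h)}.
Proof.
move=> st hint; apply: within_continuous_mx => i0 i; rewrite (ord1 i0).
have -> : (fun r => vint s r h 0 i) =
    (fun r => parameterized_integral mu s r (fun u => h u 0 i)).
  by apply: funext => r; rewrite mxE.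
exact: parameterized_integral_continuous st (hint i).
Qed.

Lemma normr_vint_le f s t u : s <= t -> t <= u -> vintegrable s u f ->
  `|vint s t f| <= \sum_i Rintegral mu `[s, u] (fun r => `|f r 0 i|).
Proof.
move=> st tu fint.
apply: mx_norm_le => [|i0 i]; first by apply: sumr_ge0 => i _; exact: Rintegral_ge0.
rewrite (ord1 i0) mxE.
have fint_t : mu.-integrable `[s, t] (EFin \o fun r => f r 0 i).
  by apply: integrableS (fint i) => //; apply: subset_itvl; rewrite bnd_simp.
apply: le_trans (le_normr_Rintegral _ fint_t) _ => //.
rewrite (bigD1 i) //= (Rintegral_itv_split st tu (integrable_norm (fint i))) -addrA lerDl.
by rewrite addr_ge0 ?sumr_ge0 // => *; exact: Rintegral_ge0.
Qed.

Lemma solution_bounded (gamma : R -> 'rV[R]_d) b S T y z :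
  (exists M, forall t, 0 <= t -> t <= 1 -> `|gamma t| <= M) ->
  0 <= S -> S <= T -> T <= 1 -> is_solution b gamma S T y z ->
  exists K, forall t, S <= t -> t <= T -> `|z t| <= K.
Proof.
move=> [M gammaM] S0 ST T1 zsol.
pose B := \sum_i Rintegral mu `[S, T] (fun r => `|b r (z r) 0 i|).
exists (`|y| + B + M + M) => t St tT.
have [zint _] := zsol T ST (lexx T); have [_ ->] := zsol t St tT.
apply: le_trans (ler_normB _ _) _; apply: lerD; last by apply: gammaM; lra.
apply: le_trans (ler_normD _ _) _; apply: lerD; last by apply: gammaM; lra.
apply: le_trans (ler_normD _ _) _; apply: lerD => //.
exact: normr_vint_le.
Qed.

End vector_integral.

Section semiflow_uniqueness.
Context {R : realType} {d : nat}.
Local Notation mu := (@lebesgue_measure R).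
Variables (gamma : R -> 'rV[R]_d) (b : R -> 'rV[R]_d -> 'rV[R]_d)
  (Phi : R -> R -> 'rV[R]_d -> 'rV[R]_d).
Hypothesis Phi_semiflow : is_semiflow b gamma Phi.

Lemma semiflow_id t x : 0 <= t -> t <= 1 -> Phi t t x = x.
Proof.
move=> t0 t1; have [_ flow _] := Phi_semiflow.
by have [_ ->] := flow t t x t0 (lexx t) t1; rewrite vint_itv1 addr0 addrK.
Qed.

Lemma semiflow_solution S T y : 0 <= S -> S <= T -> T <= 1 ->
  is_solution b gamma S T y (fun t => Phi S t y).
Proof.
move=> S0 ST T1 t St tT; have [_ flow _] := Phi_semiflow.
exact: flow S t y S0 St (le_trans tT T1).
Qed.

Variables (S T : R) (y : 'rV[R]_d) (z : R -> 'rV[R]_d).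
Hypotheses (S_ge0 : 0 <= S) (le_ST : S <= T) (T_le1 : T <= 1).
Hypothesis z_solution : is_solution b gamma S T y z.

Lemma solution_start : z S = y.
Proof. by have [_ ->] := z_solution (lexx S) le_ST; rewrite vint_itv1 addr0 addrK. Qed.

Lemma solution_integrable s t i : S <= s -> s <= t -> t <= T ->
  mu.-integrable `[s, t] (EFin \o fun r => b r (z r) 0 i).
Proof.
move=> Ss st tT; apply: integrableS ((z_solution (le_trans Ss st) tT).1 i) => //.
by apply: subset_itvr; rewrite bnd_simp.
Qed.

Let gap s r := Phi s r (z s) - z r.
Let drift_gap s r := b r (Phi s r (z s)) - b r (z r).

Lemma drift_gap_integrable s t : S <= s -> s <= t -> t <= T ->
  vintegrable s t (drift_gap s).
Proof.
move=> Ss st tT i; have [_ flow _] := Phi_semiflow.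
have [Phi_int _] := flow s t (z s) (le_trans S_ge0 Ss) st (le_trans tT T_le1).
apply: eq_integrable (integrableB _ (Phi_int i) (solution_integrable i Ss st tT)) => //.
by move=> u _ /=; rewrite !mxE.
Qed.

Lemma gap_vint s r : S <= s -> s <= r -> r <= T -> gap s r = vint s r (drift_gap s).
Proof.
move=> Ss sr rT; have [_ flow _] := Phi_semiflow; rewrite /gap.
have [Phi_int ->] := flow s r (z s) (le_trans S_ge0 Ss) sr (le_trans rT T_le1).
have [zint ->] := z_solution (le_trans Ss sr) rT.
have [_ {1}->] := z_solution Ss (le_trans sr rT).
apply/rowP => i; rewrite !mxE (Rintegral_itv_split Ss sr (zint i)).
have -> : Rintegral mu `[s, r] (fun u => drift_gap s u 0 i) =
    Rintegral mu `[s, r] (fun u => b u (Phi s u (z s)) 0 i) -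
    Rintegral mu `[s, r] (fun u => b u (z u) 0 i).
  rewrite -RintegralB ?(Phi_int i) ?(solution_integrable i Ss sr rT) //.
  by apply: eq_Rintegral => u _; rewrite !mxE.
lra.
Qed.

Variables (alpha K : R) (g : R -> \bar R).
Hypothesis alpha_gt0 : 0 < alpha.
Hypothesis g_meas : measurable_fun (`[0%R, 1%R] : set R) g.
Hypothesis g_ge0 : forall t, (0 <= g t)%E.
Hypothesis g_fin : (\int[mu]_(t in (`[0%R, 1%R] : set R)) g t < +oo)%E.
Hypothesis b_holder : forall t, 0 <= t -> t <= 1 ->
  forall x x', `|x| <= K -> `|x'| <= K ->
  ((`|b t x - b t x'|)%:E <= g t * (`|x - x'| `^ alpha)%:E)%E.
(* The margin 1 leaves room for the gap, which [gap_le_G] keeps below 1. *)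
Hypothesis z_inner : forall t, S <= t -> t <= T -> `|z t| + 1 <= K.

(* g may be infinite on a null set, hence the [fine]. *)
Let G s t := Rintegral mu `[s, t] (fine \o g).

Let G_ge0 s t : 0 <= G s t.
Proof. by apply: Rintegral_ge0 => r _; exact: fine_ge0. Qed.

Let G_subitv s t : 0 <= s -> t <= 1 -> `[s, t] `<=` (`[0%R, 1%R] : set R).
Proof. by move=> s0 t1; apply: subset_itv; rewrite bnd_simp. Qed.

Lemma G_integral s t : 0 <= s -> t <= 1 -> (\int[mu]_(r in `[s, t]) g r)%E = (G s t)%:E.
Proof.
move=> s0 t1.
by apply: (@integral_fine _ _ _ mu _ _ _ g_meas g_ge0 g_fin _ _ (G_subitv s0 t1)).
Qed.

Let G_integrable s t : 0 <= s -> t <= 1 -> mu.-integrable `[s, t] (EFin \o (fine \o g)).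
Proof.
move=> s0 t1.
by apply: (@integrable_fine _ _ _ mu _ _ _ g_meas g_ge0 g_fin _ _ (G_subitv s0 t1)).
Qed.

Lemma G_add s u t : 0 <= s -> s <= u -> u <= t -> t <= 1 -> G s t = G s u + G u t.
Proof. by move=> s0 su ut t1; apply: Rintegral_itv_split => //; exact: G_integrable. Qed.

Lemma G_continuous : {within `[0, 1], continuous (G 0)}.
Proof.
exact: parameterized_integral_continuous ler01 (G_integrable (lexx 0) (lexx 1)).
Qed.

Lemma gap_holder s t c : S <= s -> s <= t -> t <= T -> 0 <= c -> c <= 1 ->
  (forall u, s <= u -> u <= t -> `|gap s u| <= c) -> `|gap s t| <= c `^ alpha * G s t.
Proof.
move=> Ss st tT c0 c1 gap_c.
have s0 := le_trans S_ge0 Ss; have t1 := le_trans tT T_le1.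
rewrite gap_vint //; apply: mx_norm_le => [|i0 i]; first by rewrite mulr_ge0 ?powR_ge0.
rewrite (ord1 i0) mxE -lee_fin mulrC EFinM -G_integral //.
apply: le_normr_Rintegral_mul => //; [exact: powR_ge0| |exact: drift_gap_integrable|].
  by apply: measurable_funS g_meas => //; exact: G_subitv.
move=> u /= /[!in_itv] /= /andP[su ut].
have Su := le_trans Ss su; have uT := le_trans ut tT.
have zu := z_inner Su uT.
have Phi_u : `|Phi s u (z s)| <= K.
  have -> : Phi s u (z s) = z u + gap s u by rewrite addrC subrK.
  by apply: le_trans (ler_normD _ _) _; have := gap_c u su ut; lra.
apply: le_trans (_ : (`|drift_gap s u|)%:E <= _)%E.
  by rewrite lee_fin mx_coord_le_norm.
apply: le_trans (b_holder (le_trans s0 su) (le_trans ut t1) Phi_u (_ : `|z u| <= K)) _.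
  lra.
apply: lee_wpmul2l => //.
by rewrite lee_fin ge0_ler_powR ?nnegrE ?(ltW alpha_gt0) ?gap_c.
Qed.

Lemma gap_le_G s t : S <= s -> s <= t -> t <= T -> G s t < 1 ->
  forall r, s <= r -> r <= t -> `|gap s r| <= G s t.
Proof.
move=> Ss st tT G1 r sr rt; rewrite gap_vint ?(le_trans rt tT) //.
apply: (continuity_bootstrap st G1 (vint_continuous st (drift_gap_integrable Ss st tT)))
  => //; first by rewrite vint_itv1 normr0.
move=> v sv vt small; have vT := le_trans vt tT.
rewrite -gap_vint //; apply: le_trans (gap_holder Ss sv vT ler01 (lexx 1) _) _.
  by move=> u su uv; rewrite gap_vint ?(le_trans uv vT) //; exact: small.
rewrite powR1 mul1r (G_add (le_trans S_ge0 Ss) sv vt (le_trans tT T_le1)).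
by rewrite lerDl.
Qed.

Variables (beta N : R).
Hypotheses (beta_gt0 : 0 < beta) (N_ge0 : 0 <= N).
Hypothesis Phi_holder : forall s t x x', 0 <= s -> s <= t -> t <= 1 ->
  `|x| <= K -> `|x'| <= K -> `|Phi s t x - Phi s t x'| <= N * `|x - x'| `^ beta.

Lemma pullback_increment s t : S <= s -> s <= t -> t <= T -> G s t < 1 ->
  `|Phi t T (z t) - Phi s T (z s)| <= N * G s t `^ (beta * (1 + alpha)).
Proof.
move=> Ss st tT G1.
have s0 := le_trans S_ge0 Ss; have t1 := le_trans tT T_le1.
have gap_G := gap_le_G Ss st tT G1.
have [_ _ comp] := Phi_semiflow.
rewrite (comp s t T (z s)) //.
have zt := z_inner (le_trans Ss st) tT.
have Phi_t : `|Phi s t (z s)| <= K.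
  have -> : Phi s t (z s) = z t + gap s t by rewrite addrC subrK.
  by apply: le_trans (ler_normD _ _) _; have := gap_G t st (lexx t); lra.
apply: le_trans (Phi_holder (le_trans s0 st) tT T_le1 (_ : `|z t| <= K) Phi_t) _.
  lra.
rewrite ler_wpM2l // mulrC powRrM.
have a1 : alpha + 1 != 0 := lt0r_neq0 (addr_gt0 alpha_gt0 ltr01).
have -> : G s t `^ (1 + alpha) = G s t `^ alpha * G s t.
  by rewrite addrC powRD ?(negbTE a1) // powRr1.
apply: ge0_ler_powR; rewrite ?nnegrE ?mulr_ge0 ?powR_ge0 ?(ltW beta_gt0) // distrC.
exact: gap_holder (ltW G1) gap_G.
Qed.

Hypothesis holder_exponents : 1 < beta * (1 + alpha).

Theorem solution_eq_semiflow : z T = Phi S T y.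
Proof.
pose f u := Phi u T (z u).
have -> : z T = f T by rewrite /f semiflow_id // (le_trans S_ge0 le_ST).
have -> : Phi S T y = f S by rewrite /f solution_start.
apply: (small_increments_eq (H := G 0) le_ST).
  by apply: continuous_subspaceW G_continuous; exact: G_subitv.
move=> eps eps0.
have [dl dl0 small] := powR_superlinear_near0 N_ge0 eps0 holder_exponents.
exists (Num.min dl (1 / 2)) => [|s t Ss st tT]; first by rewrite lt_min dl0 /=; lra.
have s0 := le_trans S_ge0 Ss.
rewrite (G_add (lexx 0) s0 st (le_trans tT T_le1)) addrAC subrr add0r.
rewrite le_min => /andP[Gdl G12].
apply: le_trans (pullback_increment Ss st tT _) (small _ (G_ge0 s t) Gdl); lra.
Qed.

End semiflow_uniqueness.

Theorem lemma4p5 (R : realType) (d : nat) (gamma : R -> 'rV[R]_d) (alpha beta : R)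
    (b : R -> 'rV[R]_d -> 'rV[R]_d) (Phi : R -> R -> 'rV[R]_d -> 'rV[R]_d) :
  (forall i : 'I_d, measurable_fun (`[0%R, 1%R] : set R) (fun t => gamma t 0 i)) ->
  (exists M : R, forall t, 0 <= t -> t <= 1 -> `|gamma t| <= M) ->
  0 < alpha -> alpha <= 1 ->
  L1t_Calpha_loc alpha b ->
  is_semiflow b gamma Phi ->
  0 < beta -> loc_holder_semiflow beta Phi ->
  1 < beta * (1 + alpha) ->
  forall (S T : R) (y : 'rV[R]_d), 0 <= S -> S <= T -> T <= 1 ->
    is_solution b gamma S T y (fun t => Phi S t y) /\
    (forall z : R -> 'rV[R]_d, is_solution b gamma S T y z ->
       forall t, S <= t -> t <= T -> z t = Phi S t y).
Proof.
move=> _ gamma_bd alpha_gt0 _ [_ b_loc] Phi_sf beta_gt0 Phi_loc exponents S T y S0 ST T1.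
split=> [|z z_sol t St tT]; first exact: semiflow_solution.
have t1 := le_trans tT T1.
have z_sol_t : is_solution b gamma S t y z.
  by move=> u Su ut; exact: z_sol u Su (le_trans ut tT).
have [K0 zK0] := solution_bounded gamma_bd S0 St t1 z_sol_t.
have K_gt0 : 0 < `|K0| + 1 by rewrite ltr_wpDl.
have [g [g_meas g_ge0 g_fin g_bd]] := b_loc _ K_gt0.
have [N Phi_hol] := Phi_loc _ K_gt0.
apply: (solution_eq_semiflow Phi_sf S0 St t1 z_sol_t alpha_gt0 g_meas g_ge0 g_fin
  (fun r r0 r1 x x' xK x'K => (g_bd r r0 r1 x x' xK x'K).2) _ beta_gt0 (normr_ge0 N) _
  exponents).
- by move=> u Su ut; rewrite lerD2r (le_trans (zK0 u Su ut)) ?ler_norm.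
- move=> s r x x' s0 sr r1 xK x'K; apply: le_trans (Phi_hol _ _ _ _ s0 sr r1 xK x'K) _.
  by rewrite ler_wpM2r ?powR_ge0 ?ler_norm.
Qed.
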